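(* Let $H$ be an $r$-graph. Then $\Delta(i(P_{K_r^r,H}))\cong\mathrm{sd}\,\mathsf{B}_{\mathrm{edge}}(H)$ if and only if $H$ does not contain the complete $r$-partite sub-$r$-graph $K^r_{1,\dots,1,2,2}$, i.e. if and only if there do not exist pairwise disjoint sets $A_1,\dots,A_r\subseteq V(H)$ with $|A_1|=\dots=|A_{r-2}|=1$, $|A_{r-1}|=|A_r|=2$ such that $x_1\cdots x_r\in E(H)$ for every choice $x_j\in A_j$.
   Context: An $r$-graph $H$ consists of a vertex set $V(H)$ and a set $E(H)$ of $r$-element subsets of $V(H)$; an edge $\{v_1,\dots,v_r\}$ is written $v_1\cdots v_r$. $K_r^r$ is the $r$-graph on $\{1,\dots,r\}$ with the single edge $\{1,\dots,r\}$. $P_{K_r^r,H}$ is the poset of maps $f:\{1,\dots,r\}\to 2^{V(H)}\setminus\{\varnothing\}$ such that for every choice $x_j\in f(j)$ the $x_j$ are distinct and $x_1\cdots x_r\in E(H)$, ordered by $f\le g$ iff $f(j)\subseteq g(j)$ for all $j$. $\mathsf{B}_{\mathrm{edge}}(H)$ is the simplicial complex whose vertices are tuples $(v_1,\dots,v_r)\in V(H)^r$ with $v_1\cdots v_r\in E(H)$ and whose simplices are the sets $F$ of such tuples with $\mathrm{pr}_1(F),\dots,\mathrm{pr}_r(F)$ pairwise disjoint and $x_1\cdots x_r\in E(H)$ for every choice $x_j\in\mathrm{pr}_j(F)$. $\mathcal F(\mathsf{B}_{\mathrm{edge}}(H))$ denotes its poset of nonempty simplices ordered by inclusion, and $\mathrm{sd}\,\mathsf{B}_{\mathrm{edge}}(H)=\Delta(\mathcal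 F(\mathsf{B}_{\mathrm{edge}}(H)))$, where $\Delta(P)$ is the order complex (simplices = chains) of a poset $P$. The map $i:P_{K_r^r,H}\to\mathcal F(\mathsf{B}_{\mathrm{edge}}(H))$ is $i(\varphi)=\varphi(1)\times\cdots\times\varphi(r)$, and $i(P_{K_r^r,H})$ is its image, a subposet of $\mathcal F(\mathsf{B}_{\mathrm{edge}}(H))$. *)

From mathcomp Require Import all_boot.
Set Implicit Arguments. Unset Strict Implicit. Unset Printing Implicit Defensive.

Definition is_rgraph (V : finType) (r : nat) (E : {set {set V}}) : Prop :=
  forall e, e \in E -> #|e| = r.

(* tuples (v_1,...,v_r), indexed by 'I_r (0-based) *)
Notation tup V r := {ffun 'I_r -> V}.

Definition is_edge (V : finType) (r : nat) (E : {set {set V}}) (x : tup V r) : bool :=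
  [set x j | j in 'I_r] \in E.

Definition all_choices_edges (V : finType) (r : nat) (E : {set {set V}})
  (A : 'I_r -> {set V}) : bool :=
  [forall x : tup V r, [forall j, x j \in A j] ==> is_edge E x].

(* P_{K_r^r,H} : maps 'I_r -> nonempty subsets such that every choice
   consists of distinct vertices forming an edge *)
Definition in_P (V : finType) (r : nat) (E : {set {set V}})
  (f : {ffun 'I_r -> {set V}}) : bool :=
  [forall j, f j != set0] &&
  [forall x : tup V r, [forall j, x j \in f j] ==> injectiveb x && is_edge E x].

Definition iprod (V : finType) (r : nat) (f : {ffun 'I_r -> {set V}}) : {set tup V r} :=
  [set t : tup V r | [forall j, t j \in f j]].

Definition iP (V : finType) (r : nat) (E : {set {set V}}) : {set {set tup V r}} :=
  [set iprod f | f in [pred f | in_P E f]].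

Definition proj (V : finType) (r : nat) (j : 'I_r) (F : {set tup V r}) : {set V} :=
  [set (t : tup V r) j | t in F].

Definition Bvert (V : finType) (r : nat) (E : {set {set V}}) : {set tup V r} :=
  [set t : tup V r | is_edge E t].

(* nonempty simplices of B_edge(H), i.e. the face poset F(B_edge(H)) *)
Definition Bfaces (V : finType) (r : nat) (E : {set {set V}}) : {set {set tup V r}} :=
  [set F : {set tup V r} | [&& F != set0, F \subset Bvert r E,
     [forall j, forall k, (j != k) ==> [disjoint proj j F & proj k F]] &
     all_choices_edges E (fun j => proj j F)]].

Definition order_complex (T : finType) (le : rel T) (S : {set T}) : {set {set T}} :=
  [set c : {set T} | [&& c != set0, c \subset S &
     [forall x in c, forall y in c, le x y || le y x]]].

Definition subset_rel (T : finType) : rel {set T} := fun A B => A \subset B.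

(* isomorphism of (abstract) simplicial complexes given by their sets of
   nonempty simplices: a map injective on the vertex set of K1 that maps
   the simplices of K1 exactly onto the simplices of K2 *)
Definition sc_iso (T1 T2 : finType) (K1 : {set {set T1}}) (K2 : {set {set T2}}) : Prop :=
  exists f : T1 -> T2, {in cover K1 &, injective f} /\ [set f @: (s : {set T1}) | s in K1] = K2.

Definition contains_K11_22 (V : finType) (r : nat) (E : {set {set V}}) : Prop :=
  exists A : 'I_r -> {set V},
    (forall j k, j != k -> [disjoint A j & A k]) /\
    (forall j : 'I_r, #|A j| = (if (j < r - 2)%N then 1 else 2)%N) /\
    all_choices_edges E A.

From mathcomp Require Import all_boot all_fingroup zify.
Set Implicit Arguments. Unset Strict Implicit. Unset Printing Implicit Defensive.

(* Both complexes are order complexes of subposets of the same poset of sets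
   of tuples, with i(P) contained in F(B_edge(H)); since the vertex set of an
   order complex is the poset itself, they are isomorphic iff the two posets
   coincide.  A face F of B_edge(H) lies in i(P) iff it is the product of its
   projections, which holds as soon as at most one projection has two
   elements.  Two projections with two elements each yield a copy of
   K_{1,...,1,2,2}; conversely such a copy carries the face {s1, s2} whose
   "mixed" tuple is missing, so this face is not a product. *)

Lemma cover_order_complex (T : finType) (S : {set {set T}}) :
  cover (order_complex (@subset_rel T) S) = S.
Proof.
apply/setP=> x; apply/bigcupP/idP => [[c]|xS].
  by rewrite inE => /and3P[_ /subsetP cS _]; apply: cS.
exists [set x]; last exact: set11.
rewrite inE sub1set xS; apply/and3P; split=> //.
  by apply/set0Pn; exists x; rewrite set11.
by apply/forall_inP=> y /set1P-> ; apply/forall_inP=> z /set1P->; rewrite /subset_rel subxx.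
Qed.

Lemma sc_iso_card_cover (T1 T2 : finType) (K1 : {set {set T1}}) (K2 : {set {set T2}}) :
  sc_iso K1 K2 -> #|cover K2| <= #|cover K1|.
Proof.
case=> f [_ <-]; rewrite cover_imset -imset_cover; exact: leq_imset_card.
Qed.

Lemma sc_iso_refl (T : finType) (K : {set {set T}}) : sc_iso K K.
Proof.
exists id; split=> //; rewrite -[RHS]imset_id; apply: eq_imset => s; exact: imset_id.
Qed.

Section Products.
Variables (V : finType) (r : nat).

Definition disjoint_family (A : 'I_r -> {set V}) :=
  forall i j, i != j -> [disjoint A i & A j].

Lemma tup_choice (A : 'I_r -> {set V}) :
  (forall i, A i != set0) -> exists c : tup V r, forall i, c i \in A i.
Proof.
move=> A_ne; have /fin_all_exists[c Ac] : forall i, exists v, v \in A i.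
  by move=> i; apply/set0Pn.
by exists (finfun c) => i; rewrite ffunE.
Qed.

Lemma proj_iprod (f : {ffun 'I_r -> {set V}}) j :
  [forall i, f i != set0] -> proj j (iprod f) = f j.
Proof.
move=> /forallP/tup_choice[c fc]; apply/setP=> v; apply/imsetP/idP => [[t]|vf].
  by rewrite inE => /forallP ft ->.
exists [ffun i => if i == j then v else c i]; last by rewrite ffunE eqxx.
by rewrite inE; apply/forallP=> i; rewrite ffunE; case: eqP => [->|].
Qed.

Lemma iprod_mix (f : {ffun 'I_r -> {set V}}) (J : pred 'I_r) (s t : tup V r) :
  s \in iprod f -> t \in iprod f -> [ffun i => if J i then s i else t i] \in iprod f.
Proof.
rewrite !inE => /forallP fs /forallP ft.
by apply/forallP=> i; rewrite ffunE; case: (J i).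
Qed.

Lemma subset_iprod_proj (F : {set tup V r}) : F \subset iprod [ffun j => proj j F].
Proof.
by apply/subsetP=> t tF; rewrite inE; apply/forallP=> j; rewrite ffunE; apply: imset_f.
Qed.

Lemma iprod_proj_subset (F : {set tup V r}) j0 :
  (forall i, i != j0 -> #|proj i F| <= 1) -> iprod [ffun j => proj j F] \subset F.
Proof.
move=> small; apply/subsetP=> t; rewrite inE => /forallP tF.
have t_proj i : t i \in proj i F by have := tF i; rewrite ffunE.
have /imsetP[s sF tj0] := t_proj j0.
suff -> : t = s by [].
apply/ffunP=> i; have [->//|ij0] := eqVneq i j0.
by have /card_le1_eqP := small i ij0; apply; first [exact: t_proj | exact: imset_f].
Qed.

Variable E : {set {set V}}.

Lemma all_choices_edgesS (A B : 'I_r -> {set V}) :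
  (forall i, B i \subset A i) -> all_choices_edges E A -> all_choices_edges E B.
Proof.
move=> BA /forallP A_edges; apply/forallP=> x; apply/implyP=> /forallP xB.
by apply: (implyP (A_edges x)); apply/forallP=> i; apply: (subsetP (BA i)).
Qed.

Lemma is_edge_perm (p : {perm 'I_r}) (x : tup V r) :
  is_edge E [ffun i => x (p i)] = is_edge E x.
Proof.
rewrite /is_edge; congr (_ \in E); apply/setP=> v; apply/imsetP/imsetP=> -[i _ ->].
  by exists (p i); rewrite ?ffunE.
by exists (p^-1 i)%g; rewrite ?ffunE ?permKV.
Qed.

Lemma all_choices_edges_perm (p : {perm 'I_r}) (A : 'I_r -> {set V}) :
  all_choices_edges E A -> all_choices_edges E (fun i => A (p i)).
Proof.
move=> /forallP A_edges; apply/forallP=> x; apply/implyP=> /forallP xA.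
rewrite -(is_edge_perm p^-1); apply: (implyP (A_edges _)).
by apply/forallP=> i; rewrite ffunE; have := xA (p^-1 i)%g; rewrite permKV.
Qed.

(* The condition [F \subset Bvert r E] in [Bfaces] is redundant. *)
Lemma BfacesP (F : {set tup V r}) :
  F \in Bfaces r E <->
  [/\ F != set0, disjoint_family (fun j => proj j F)
    & all_choices_edges E (fun j => proj j F)].
Proof.
rewrite inE; split=> [/and4P[F_ne _ /forallP F_dis F_edges]|[F_ne F_dis F_edges]].
  by split=> // j k jk; apply: (implyP (forallP (F_dis j) k)).
apply/and4P; split=> //.
- apply/subsetP=> t tF; rewrite inE; apply: (implyP (forallP F_edges t)).
  by apply/forallP=> j; apply: imset_f.
- by apply/forallP=> j; apply/forallP=> k; apply/implyP; apply: F_dis.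
Qed.

Lemma iprod_in_Bfaces (f : {ffun 'I_r -> {set V}}) :
  in_P E f -> iprod f \in Bfaces r E.
Proof.
move=> /andP[f_ne /forallP f_good].
have proj_f j : proj j (iprod f) = f j := proj_iprod j f_ne.
have [c fc] := tup_choice (forallP f_ne).
have f_edges : all_choices_edges E f.
  by apply/forallP=> x; apply/implyP=> /(implyP (f_good x))/andP[].
apply/BfacesP; split.
- by apply/set0Pn; exists c; rewrite inE; apply/forallP.
- move=> j k jk; rewrite !proj_f -setI_eq0; apply/set0Pn=> -[v /setIP[vj vk]].
  pose t := [ffun i => if (i == j) || (i == k) then v else c i].
  have t_in : [forall i, t i \in f i].
    apply/forallP=> i; rewrite ffunE.
    by case: eqP => [->|_] //=; case: eqP => [->|_].
  have /andP[/injectiveP t_inj _] := implyP (f_good t) t_in.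
  by move: jk; rewrite (@t_inj j k) ?eqxx // !ffunE !eqxx orbT.
- by apply: all_choices_edgesS f_edges => j; rewrite proj_f.
Qed.

Lemma iP_subset_Bfaces : iP r E \subset Bfaces r E.
Proof. by apply/subsetP=> F /imsetP[f f_in ->]; apply: iprod_in_Bfaces. Qed.

Lemma in_P_proj (F : {set tup V r}) : F \in Bfaces r E -> in_P E [ffun j => proj j F].
Proof.
move=> /BfacesP[/set0Pn[t0 t0F] F_dis /forallP F_edges]; apply/andP; split.
  by apply/forallP=> j; rewrite ffunE; apply/set0Pn; exists (t0 j); apply: imset_f.
apply/forallP=> x; apply/implyP=> /forallP x_in.
have x_proj j : x j \in proj j F by have := x_in j; rewrite ffunE.
apply/andP; split; last by apply: (implyP (F_edges x)); apply/forallP.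
apply/injectiveP=> i j xij; apply/eqP/negP=> /negP/F_dis/disjointFr/(_ (x_proj i)).
by rewrite xij x_proj.
Qed.

Lemma contains_K11_22P : 2 <= r ->
  contains_K11_22 r E <->
  exists (A : 'I_r -> {set V}) (j k : 'I_r),
    [/\ j != k, disjoint_family A,
        forall i, #|A i| = (if (i == j) || (i == k) then 2 else 1)
      & all_choices_edges E A].
Proof.
move=> r2; have [lt2 lt1] : r - 2 < r /\ r - 1 < r by lia.
pose j2 := Ordinal lt2; pose j1 := Ordinal lt1.
have j12 : j2 != j1 by apply/eqP=> /(congr1 val) /=; lia.
have shape (i : 'I_r) :
    (if i < r - 2 then 1 else 2) = (if (i == j2) || (i == j1) then 2 else 1).
  by rewrite -!val_eqE /=; have := ltn_ord i; case: ifP => ?; case: ifP => ? ?; lia.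
split=> [[A [A_dis [A_card A_edges]]]|[B [j [k [jk B_dis B_card B_edges]]]]].
  by exists A, j2, j1; split=> // i; rewrite A_card shape.
pose k' := tperm j2 j k.
have k'j2 : k' != j2.
  apply: contra jk => /eqP k'2; apply/eqP.
  by rewrite -(tpermK j2 j k) -/k' k'2 tpermL.
have j21 : j1 != j2 by rewrite eq_sym.
pose p : {perm 'I_r} := (tperm j1 k' * tperm j2 j)%g.
have p_j2 : p j2 = j by rewrite permM (tpermD j21 k'j2) tpermL.
have p_j1 : p j1 = k by rewrite permM tpermL tpermK.
exists (fun i => B (p i)); split; [|split; last exact: all_choices_edges_perm].
- by move=> i i' ii'; apply: B_dis; rewrite (inj_eq perm_inj).
- by move=> i; rewrite B_card shape -p_j2 -p_j1 !(inj_eq perm_inj).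
Qed.

Lemma contains_K11_22_of_face (F : {set tup V r}) (j k : 'I_r) :
  2 <= r -> F \in Bfaces r E -> j != k ->
  1 < #|proj j F| -> 1 < #|proj k F| -> contains_K11_22 r E.
Proof.
move=> r2 /BfacesP[/set0Pn[t0 t0F] F_dis F_edges] jk.
move=> /card_gt1P[a1 [a2 [a1F a2F a12]]] /card_gt1P[b1 [b2 [b1F b2F b12]]].
pose B i := if i == j then [set a1; a2] else if i == k then [set b1; b2] else [set t0 i].
have B_proj i : B i \subset proj i F.
  rewrite /B; case: eqP => [->|_]; first by apply/subsetP=> v /set2P[]->.
  case: eqP => [->|_]; first by apply/subsetP=> v /set2P[]->.
  by rewrite sub1set; apply: imset_f.
apply/(contains_K11_22P r2); exists B, j, k; split=> //.
- by move=> i i' ii'; apply: disjointW (B_proj i) (B_proj i') (F_dis i i' ii').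
- move=> i; rewrite /B; case: eqP => _; [|case: eqP => _];
    by rewrite ?cards2 ?a12 ?b12 ?cards1.
- exact: all_choices_edgesS F_edges.
Qed.

Lemma Bfaces_subset_iP : 2 <= r -> ~ contains_K11_22 r E -> Bfaces r E \subset iP r E.
Proof.
move=> r2 noK; apply/subsetP=> F F_face; apply/imsetP.
exists [ffun j => proj j F]; first by rewrite inE in_P_proj.
apply/eqP; rewrite eqEsubset subset_iprod_proj.
have [j0 small] : exists j0, forall i, i != j0 -> #|proj i F| <= 1.
  case: (pickP (fun j => 1 < #|proj j F|)) => [j big_j|none].
    exists j => i ij; rewrite leqNgt; apply/negP=> big_i; apply: noK.
    exact: contains_K11_22_of_face F_face ij big_i big_j.
  have r_gt0 : 0 < r by lia.
  by exists (Ordinal r_gt0) => i _; rewrite leqNgt none.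
exact: iprod_proj_subset small.
Qed.

Lemma Bface_notin_iP : 2 <= r -> contains_K11_22 r E ->
  exists2 F, F \in Bfaces r E & F \notin iP r E.
Proof.
move=> r2 /(contains_K11_22P r2)[A [j [k [jk A_dis A_card A_edges]]]].
have /cards2P[a1 [a2 [a12 Aj]]] : #|A j| == 2 by rewrite A_card eqxx.
have /cards2P[b1 [b2 [b12 Ak]]] : #|A k| == 2 by rewrite A_card eqxx orbT.
have [c Ac] : exists c : tup V r, forall i, c i \in A i.
  by apply: tup_choice => i; rewrite -card_gt0 A_card; case: ifP.
pose mk a b : tup V r := [ffun i => if i == j then a else if i == k then b else c i].
have mk_in a b i : a \in A j -> b \in A k -> mk a b i \in A i.
  by move=> aj bk; rewrite ffunE; case: eqP => [->|_] //; case: eqP => [->|_].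
have [a1j a2j] : a1 \in A j /\ a2 \in A j by rewrite Aj !inE !eqxx orbT.
have [b1k b2k] : b1 \in A k /\ b2 \in A k by rewrite Ak !inE !eqxx orbT.
pose F := [set mk a1 b1; mk a2 b2].
have F_proj i : proj i F \subset A i.
  by apply/subsetP=> v /imsetP[s /set2P[]-> ->]; apply: mk_in.
exists F.
  apply/BfacesP; split; first by apply/set0Pn; exists (mk a1 b1); rewrite set21.
  - by move=> i i' ii'; apply: disjointW (F_proj i) (F_proj i') (A_dis i i' ii').
  - exact: all_choices_edgesS A_edges.
apply/negP=> /imsetP[f _ F_prod].
have /(iprod_mix (pred1 j)) : mk a1 b1 \in iprod f by rewrite -F_prod set21.
move=> /(_ (mk a2 b2)); rewrite -F_prod set22 => /(_ isT) /set2P.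
have kj : (k == j) = false by rewrite eq_sym (negbTE jk).
case=> /ffunP mix_eq; [have := mix_eq k | have := mix_eq j];
  by rewrite !ffunE /= ?kj !eqxx => /eqP; rewrite ?(negbTE a12) // eq_sym (negbTE b12).
Qed.

End Products.

Theorem mainTheorem3 (V : finType) (r : nat) (E : {set {set V}}) :
  (2 <= r)%N -> is_rgraph r E ->
  (sc_iso (order_complex (@subset_rel (tup V r)) (iP r E))
          (order_complex (@subset_rel (tup V r)) (Bfaces r E))
   <-> ~ contains_K11_22 r E).
Proof.
move=> r2 _; split=> [iso K|noK].
  have [F F_face F_notin] := Bface_notin_iP r2 K.
  have iP_proper : iP r E \proper Bfaces r E.
    by apply/properP; split; [exact: iP_subset_Bfaces | exists F].
  have := sc_iso_card_cover iso; rewrite !cover_order_complex.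
  by rewrite leqNgt proper_card.
have -> : iP r E = Bfaces r E.
  by apply/eqP; rewrite eqEsubset iP_subset_Bfaces Bfaces_subset_iP.
exact: sc_iso_refl.
Qed.
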